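(* Let $G=(V,E)$ be a planar graph with a fixed planar embedding, let $c,\delta,\varepsilon\in(0,1)$, let $k\ge1$ be an integer, and let $\ell\ge 2k^2+2k\delta^{-1}+2\varepsilon^{-1}-1$ be an integer. Then for any $c$-maximum independent sets $S_1,\dots,S_k$ of $G$ there exists $p\in\{0,\dots,\ell\}$ such that simultaneously (i) $|S_h\cap L^p|\le(\delta/2)|S_h|$ for all $h\in[k]$; (ii) $\sum_{i\ne j}|(S_i\cap L^p)\Delta(S_j\cap L^p)|\le(\varepsilon/2)\sum_{i\ne j}|S_i\Delta S_j|$; and (iii) $|(S_i\cap L^p)\Delta(S_j\cap L^p)|\le\frac12|S_i\Delta S_j|$ for every $i\ne j$. Consequently, if moreover $|S_i\Delta S_j|\ge 2$ for all $i\ne j$, then the sets $S_i\setminus L^p$, $i\in[k]$, are pairwise distinct.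
   Context: Levels of vertices of an embedded planar graph: a vertex is at level 1 if it lies on the exterior face; inductively, vertices on the exterior face of the graph obtained after deleting all vertices of levels $1,\dots,i-1$ are at level $i$. For an integer $\ell\ge 0$ and $p\in\{0,\dots,\ell\}$, the $p$-th stratum $L^p$ is the set of vertices whose level is congruent to $p$ modulo $\ell+1$. A $c$-maximum independent set is an independent set $S$ with $|S|\ge c$ times the maximum size of an independent set of $G$. *)

From HB Require Import structures.
From mathcomp Require Import all_boot all_order all_algebra.
From mathcomp Require Import all_classical all_reals all_analysis.
Set Implicit Arguments. Unset Strict Implicit. Unset Printing Implicit Defensive.
Import numFieldNormedType.Exports.
Import Order.TTheory GRing.Theory Num.Theory.
Local Open Scope classical_set_scope.
Local Open Scope ring_scope.

Definition simple_graph (V : finType) (e : rel V) : Prop :=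
  symmetric e /\ irreflexive e.

(* A planar embedding (drawing) of (V, e) in the plane R x R:
   - pos : injective placement of the vertices;
   - arc u v : a Jordan arc [0,1] -> plane from pos u to pos v for each edge,
     traversed in reverse for (v,u);
   - the interior of an arc contains no vertex;
   - interiors of arcs of distinct edges are disjoint. *)
Definition planar_embedding (R : realType) (V : finType) (e : rel V)
    (pos : V -> R * R) (arc : V -> V -> R -> R * R) : Prop :=
  [/\ injective pos,
      (forall u v, e u v ->
         [/\ {within [set t : R | 0 <= t <= 1], continuous (arc u v)},
             {in [set t : R | 0 <= t <= 1] &, injective (arc u v)},
             arc u v 0 = pos u, arc u v 1 = pos v &
             forall t, arc v u t = arc u v (1 - t)]),
      (forall u v w t, e u v -> 0 < t < 1 -> arc u v t <> pos w) &
      (forall u v x y t s, e u v -> e x y -> 0 < t < 1 -> 0 < s < 1 ->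
         ~ ((u == x) && (v == y) || (u == y) && (v == x)) ->
         arc u v t <> arc x y s)].

Definition drawing (R : realType) (V : finType) (e : rel V)
    (pos : V -> R * R) (arc : V -> V -> R -> R * R) (W : {set V}) : set (R * R) :=
  [set z | (exists2 v, v \in W & pos v = z) \/
           (exists u v t, [/\ u \in W, v \in W, e u v, 0 <= t <= 1 & arc u v t = z])].

(* The exterior (unbounded) face of the drawing of W: points of the complement
   whose connected component in the complement is unbounded. *)
Definition exterior_face (R : realType) (V : finType) (e : rel V)
    (pos : V -> R * R) (arc : V -> V -> R -> R * R) (W : {set V}) : set (R * R) :=
  let D := drawing e pos arc W in
  [set z | ~ D z /\ forall M : R, exists y,
       connected_component (~` D) z y /\ M < `|y.1| + `|y.2|].

Definition on_exterior (R : realType) (V : finType) (e : rel V)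
    (pos : V -> R * R) (arc : V -> V -> R -> R * R) (W : {set V}) (v : V) : Prop :=
  v \in W /\ closure (exterior_face e pos arc W) (pos v).

Definition outer_layer (R : realType) (V : finType) (e : rel V)
    (pos : V -> R * R) (arc : V -> V -> R -> R * R) (W : {set V}) : {set V} :=
  [set v in W | `[< on_exterior e pos arc W v >]].

(* remaining i = vertices of level > i (remaining after deleting levels 1..i). *)
Fixpoint remaining (R : realType) (V : finType) (e : rel V)
    (pos : V -> R * R) (arc : V -> V -> R -> R * R) (i : nat) : {set V} :=
  match i with
  | 0 => [set: V]%SET
  | i'.+1 => let W := remaining e pos arc i' in W :\: outer_layer e pos arc W
  end.

Definition has_level (R : realType) (V : finType) (e : rel V)
    (pos : V -> R * R) (arc : V -> V -> R -> R * R) (v : V) (lvl : nat) : Prop :=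
  exists i, lvl = i.+1 /\ v \in outer_layer e pos arc (remaining e pos arc i).

Definition stratum (R : realType) (V : finType) (e : rel V)
    (pos : V -> R * R) (arc : V -> V -> R -> R * R) (l p : nat) : {set V} :=
  [set v | `[< exists lvl, has_level e pos arc v lvl /\ (lvl %% l.+1)%N = p >]].

Definition independent (V : finType) (e : rel V) (S : {set V}) : bool :=
  [forall u in S, forall v in S, ~~ e u v].

Definition alpha (V : finType) (e : rel V) : nat :=
  \max_(S : {set V} | independent e S) #|S|.

Definition c_max_independent (R : realType) (V : finType) (e : rel V)
    (c : R) (S : {set V}) : Prop :=
  independent e S /\ c * (alpha e)%:R <= (#|S|)%:R.

Definition symdiff (V : finType) (A B : {set V}) : {set V} :=
  (A :\: B) :|: (B :\: A).

From HB Require Import structures.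
From mathcomp Require Import all_boot all_order all_algebra.
From mathcomp Require Import all_classical all_reals all_analysis.
From mathcomp Require Import lra.
Import numFieldNormedType.Exports.
Import Order.TTheory GRing.Theory Num.Theory.
Set Implicit Arguments.
Unset Strict Implicit.
Unset Printing Implicit Defensive.

Local Open Scope ring_scope.

(* Every vertex has at most one level, so the strata L^0, ..., L^l are pairwise
   disjoint and each quantity in (i)-(iii) is spread over l+1 strata with total at
   most its value on the whole graph. By Markov's inequality, fewer than 2k/delta
   strata violate (i), fewer than 2/eps violate (ii) and fewer than 2k^2 violate
   (iii); the bound on l leaves a stratum violating none of them. If S_i \ L^p = S_j \ L^p then the whole
   of S_i Delta S_j lies in L^p, which (iii) forbids unless it is empty. *)

Section Strata.
Variables (R : realType) (V : finType) (e : rel V).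
Variables (pos : V -> R * R) (arc : V -> V -> R -> R * R).

Lemma remaining_subset i j :
  (i <= j)%N -> remaining e pos arc j \subset remaining e pos arc i.
Proof.
move=> /subnKC <-; elim: (j - i)%N => [|n IHn]; first by rewrite addn0.
rewrite addnS (fintype.subset_trans _ IHn) //=; exact: subsetDl.
Qed.

Lemma outer_layer_remaining_inj v i j :
  v \in outer_layer e pos arc (remaining e pos arc i) ->
  v \in outer_layer e pos arc (remaining e pos arc j) -> i = j.
Proof.
wlog lt_ij : i j / (i < j)%N.
  move=> wlog_lt vi vj; case: (ltngtP i j) => // [ij|ji]; first exact: wlog_lt.
  by apply/esym/wlog_lt.
move=> vi; rewrite inE => /andP[/(fintype.subsetP (remaining_subset lt_ij))].
by rewrite inE vi.
Qed.

Lemma has_level_inj v m n : has_level e pos arc v m -> has_level e pos arc v n -> m = n.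
Proof.
by move=> [i [-> vi]] [j [-> vj]]; rewrite (outer_layer_remaining_inj vi vj).
Qed.

Lemma stratum_disjoint l p q :
  p != q -> [disjoint stratum e pos arc l p & stratum e pos arc l q].
Proof.
move=> npq; apply/pred0P => v /=; rewrite !inE.
apply/negP => /andP[/asboolP[m [vm mp]] /asboolP[n [vn nq]]].
by move: npq; rewrite -mp -nq (has_level_inj vm vn) eqxx.
Qed.

End Strata.

Lemma sum_card_setI_le (I V : finType) (T : I -> {set V}) (A : {set V}) :
  (forall i j, i != j -> [disjoint T i & T j]) -> (\sum_i #|A :&: T i| <= #|A|)%N.
Proof.
move=> disjT.
have cardE i : #|A :&: T i| = (\sum_(x in A) (x \in T i))%N.
  rewrite -sum1_card big_mkcond [RHS]big_mkcond; apply: eq_bigr => x _.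
  by rewrite inE; case: (x \in A); case: (x \in T i).
under eq_bigr do rewrite cardE.
rewrite exchange_big /= -sum1_card leq_sum // => x _.
case: (pickP (fun i => x \in T i)) => [i xTi|noT]; last by rewrite big1 // => i _; rewrite noT.
rewrite (bigD1 i) //= xTi big1 // => j nji.
by rewrite (disjointFl (disjT j i nji) xTi).
Qed.

Lemma card_bigcup_le (I V : finType) (B : I -> {set V}) :
  (#|\bigcup_i B i| <= \sum_i #|B i|)%N.
Proof.
elim/big_rec2: _ => [|i n U _ leUn]; first by rewrite cards0.
by rewrite (leq_trans (leq_card_setU _ _)) ?leq_add2l.
Qed.

Section Averaging.
Variable R : realFieldType.

Lemma card_above_fraction_lt (I : finType) (a : I -> nat) (M : nat) (t : R) :
  0 < t -> (\sum_i a i <= M)%N -> #|[set i | t * M%:R < (a i)%:R]|%:R < t^-1.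
Proof.
move=> t_gt0 sum_le; set B := [set i | _].
have [->|[i0 i0B]] := set_0Vmem B; first by rewrite cards0 invr_gt0.
have sumB_le : \sum_(i in B) (a i)%:R <= M%:R :> R.
  rewrite -natr_sum ler_nat (leq_trans _ sum_le) //.
  by rewrite [leqRHS](bigID (mem B)) leq_addr.
have sumB_gt : (t * M%:R) *+ #|B| < \sum_(i in B) (a i)%:R.
  rewrite -sumr_const; apply: ltr_sum => [|i]; last by rewrite inE.
  by apply/hasP; exists i0; rewrite ?mem_index_enum.
have M_gt0 : 0 < M%:R :> R.
  rewrite ltr0n lt0n; apply: contraTneq (lt_le_trans sumB_gt sumB_le) => ->.
  by rewrite mulr0 mul0rn ltxx.
rewrite -[t^-1]mul1r ltr_pdivlMr // -(ltr_pM2r M_gt0) mul1r.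
by rewrite -mulrA mulr_natl (lt_le_trans sumB_gt sumB_le).
Qed.

Lemma exists_below_fractions (I J : finType) (a : J -> I -> nat) (M : J -> nat)
    (t : J -> R) :
  (0 < #|J|)%N -> (forall j, 0 < t j) -> (forall j, \sum_i a j i <= M j)%N ->
  \sum_j (t j)^-1 <= #|I|%:R ->
  exists i, forall j, (a j i)%:R <= t j * (M j)%:R.
Proof.
move=> /card_gt0P[j0 _] t_gt0 sum_le budget.
pose B j := [set i | t j * (M j)%:R < (a j i)%:R].
case: (pickP (fun i => [forall j, i \notin B j])) => [i /forallP i_good|all_bad].
  by exists i => j; have := i_good j; rewrite inE -leNgt.
have cover_I : (#|I| <= \sum_j #|B j|)%N.
  rewrite -cardsT (leq_trans _ (card_bigcup_le B)) // subset_leq_card //.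
  apply/fintype.subsetP => i _; have /negbT := all_bad i; rewrite negb_forall.
  by case/existsP => j; rewrite negbK => iBj; apply/bigcupP; exists j.
have sumB_lt : \sum_j (#|B j|)%:R < \sum_j (t j)^-1 :> R.
  apply: ltr_sum => [|j _]; first by apply/hasP; exists j0; rewrite ?mem_index_enum.
  exact: card_above_fraction_lt.
by move: (lt_le_trans sumB_lt budget); rewrite -natr_sum ltr_nat ltnNge cover_I.
Qed.

End Averaging.

Lemma symdiff_setIr (V : finType) (A B T : {set V}) :
  symdiff (A :&: T) (B :&: T) = symdiff A B :&: T.
Proof.
by apply/setP => x; rewrite !inE; case: (x \in A); case: (x \in B); case: (x \in T).
Qed.

Lemma setD_neq_of_card_symdiffI_lt (V : finType) (A B T : {set V}) :
  (#|symdiff A B :&: T| < #|symdiff A B|)%N -> A :\: T != B :\: T.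
Proof.
apply: contraTneq => eqABT; suff /finset.setIidPl -> : symdiff A B \subset T by rewrite ltnn.
apply/fintype.subsetP => x; rewrite !inE.
case xT: (x \in T) => //; move/setP/(_ x): eqABT; rewrite !inE xT /=.
by move=> ->; rewrite andNb.
Qed.

Section GoodPart.
Variables (R : realFieldType) (V : finType) (T : nat -> {set V}) (l k : nat).
Variables (S : 'I_k -> {set V}) (delta eps : R).
Hypothesis T_disjoint : forall p q, p != q -> [disjoint T p & T q].
Hypotheses (delta_gt0 : 0 < delta) (eps_gt0 : 0 < eps).
Hypothesis l_large : 2 * k%:R ^+ 2 + 2 * k%:R / delta + 2 / eps - 1 <= l%:R.

Local Notation D i j := (symdiff (S i) (S j)).

(* One constraint per condition (i), (ii), (iii); constraint [c] holds at [p] when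
   [load c (T p) <= fraction c * budget c]. *)
Definition constraint := ('I_k + unit + 'I_k * 'I_k)%type.

Definition load (c : constraint) (X : {set V}) : nat :=
  match c with
  | inl (inl h) => #|S h :&: X|
  | inl (inr _) => \sum_i \sum_(j | i != j) #|D i j :&: X|
  | inr (i, j) => #|D i j :&: X|
  end.

Definition budget (c : constraint) : nat :=
  match c with
  | inl (inl h) => #|S h|
  | inl (inr _) => \sum_i \sum_(j | i != j) #|D i j|
  | inr (i, j) => #|D i j|
  end.

Definition fraction (c : constraint) : R :=
  match c with inl (inl _) => delta / 2 | inl (inr _) => eps / 2 | inr _ => 1 / 2 end.

Lemma sum_load_le c : (\sum_(p < l.+1) load c (T p) <= budget c)%N.
Proof.
have disjT (A : {set V}) : (\sum_(p < l.+1) #|A :&: T p| <= #|A|)%N.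
  by apply: sum_card_setI_le => p q; rewrite -val_eqE; exact: T_disjoint.
case: c => [[h|_]|[i j]] /=; try exact: disjT.
rewrite exchange_big leq_sum // => i _.
by rewrite exchange_big leq_sum // => j _.
Qed.

Lemma sum_inv_fraction_le : \sum_c (fraction c)^-1 <= #|'I_l.+1|%:R.
Proof.
rewrite !big_sumType /= !sumr_const card_prod !card_ord card_unit.
rewrite [(delta / 2)^-1]invf_div [(eps / 2)^-1]invf_div [(1 / 2)^-1]invf_div divr1.
rewrite mulr1n -[_ *+ k]mulr_natr -[_ *+ (k * k)]mulr_natr natrM mulrAC -[l.+1%:R]natr1.
by move: l_large; rewrite expr2 => ?; lra.
Qed.

Lemma exists_good_part : exists p : nat, [/\ (p <= l)%N,
    (forall h, (#|S h :&: T p|)%:R <= delta / 2 * (#|S h|)%:R),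
    ((\sum_(i < k) \sum_(j < k | i != j)
        (#|symdiff (S i :&: T p) (S j :&: T p)|)%:R : R)
      <= eps / 2 * \sum_(i < k) \sum_(j < k | i != j) (#|symdiff (S i) (S j)|)%:R),
    (forall i j, i != j ->
       (#|symdiff (S i :&: T p) (S j :&: T p)|)%:R
         <= (1 / 2 : R) * (#|symdiff (S i) (S j)|)%:R) &
    ((forall i j, i != j -> (2 <= #|symdiff (S i) (S j)|)%N) ->
       forall i j, i != j -> S i :\: T p != S j :\: T p)].
Proof.
have fraction_gt0 c : 0 < fraction c by case: c => [[]|] /=; rewrite divr_gt0.
have [|p good] := exists_below_fractions (a := fun c (p : 'I_l.+1) => load c (T p))
  (M := budget) _ fraction_gt0 sum_load_le sum_inv_fraction_le.
  by apply/card_gt0P; exists (inl (inr tt)).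
have halve i j :
    (#|symdiff (S i :&: T p) (S j :&: T p)|)%:R <= (1 / 2 : R) * (#|D i j|)%:R.
  by rewrite symdiff_setIr; exact: good (inr (i, j)).
exists p; split=> [|h||i j _|D_ge2 i j nij]; first by rewrite -ltnS.
- exact: good (inl (inl h)).
- have natr_sum2 (F : 'I_k -> 'I_k -> nat) :
      \sum_i \sum_(j | i != j) (F i j)%:R = (\sum_i \sum_(j | i != j) F i j)%:R :> R.
    by rewrite natr_sum; apply: eq_bigr => i _; rewrite natr_sum.
  under eq_bigr do under eq_bigr do rewrite symdiff_setIr.
  rewrite (natr_sum2 (fun i j => #|D i j :&: T p|)) (natr_sum2 (fun i j => #|D i j|)).
  exact: good (inl (inr tt)).
- exact: halve.
apply: setD_neq_of_card_symdiffI_lt; rewrite -symdiff_setIr -(ltr_nat R).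
by have := halve i j; have := D_ge2 i j nij; rewrite -(ler_nat R); lra.
Qed.

End GoodPart.

Theorem mainTheorem5 (R : realType) (V : finType) (e : rel V)
    (pos : V -> R * R) (arc : V -> V -> R -> R * R)
    (c delta eps : R) (k l : nat) (S : 'I_k -> {set V}) :
  simple_graph e ->
  planar_embedding e pos arc ->
  0 < c < 1 -> 0 < delta < 1 -> 0 < eps < 1 ->
  (1 <= k)%N ->
  2 * (k%:R) ^+ 2 + 2 * k%:R / delta + 2 / eps - 1 <= l%:R ->
  (forall h, c_max_independent e c (S h)) ->
  exists p : nat, [/\ (p <= l)%N,
    (forall h, (#|S h :&: stratum e pos arc l p|)%:R <= delta / 2 * (#|S h|)%:R),
    ((\sum_(i < k) \sum_(j < k | i != j)
        (#|symdiff (S i :&: stratum e pos arc l p) (S j :&: stratum e pos arc l p)|)%:R : R)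
      <= eps / 2 * \sum_(i < k) \sum_(j < k | i != j) (#|symdiff (S i) (S j)|)%:R),
    (forall i j, i != j ->
       (#|symdiff (S i :&: stratum e pos arc l p) (S j :&: stratum e pos arc l p)|)%:R
         <= (1 / 2 : R) * (#|symdiff (S i) (S j)|)%:R) &
    ((forall i j, i != j -> (2 <= #|symdiff (S i) (S j)|)%N) ->
       forall i j, i != j -> S i :\: stratum e pos arc l p != S j :\: stratum e pos arc l p)].
Proof.
move=> _ _ _ /andP[delta_gt0 _] /andP[eps_gt0 _] _ l_large _.
exact: exists_good_part (stratum_disjoint e pos arc l) delta_gt0 eps_gt0 l_large.
Qed.
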